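(* If $v_0=v^*$, then $$\eta\sum_{i=1}^n\langle\phi(x_i),P\widehat v_{i-1}\rangle^2\le 100\cdot\alpha^2\cdot\log^2 n\cdot\log\|v_n\|_2.$$
   Context: Setting: $\phi(x_1),\dots,\phi(x_n)\in\mathbb{R}^d$ are feature vectors of samples $x_1,\dots,x_n$; $\eta\in(0,0.1)$; $\beta\ge\alpha>0$; $v^*\in\mathbb{R}^d$ satisfies $\|v^*\|_2=1$, $\eta\sum_{i=1}^n\langle v^*,\phi(x_i)\rangle^2=\beta$, and $\eta\sum_{i=1}^n\langle w,\phi(x_i)\rangle^2\le\alpha$ for every $w$ with $\|w\|_2\le1$ and $\langle w,v^*\rangle=0$. $P=I-v^*(v^* )^\top$. The iterates are $v_i=v_{i-1}+\eta\langle\phi(x_i),v_{i-1}\rangle\phi(x_i)$ for $i\in[n]$, and $\widehat v_i=v_i/\|v_i\|_2$. *)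

From HB Require Import structures.
From mathcomp Require Import all_boot all_order all_algebra.
From mathcomp Require Import all_classical all_reals all_analysis.
Set Implicit Arguments. Unset Strict Implicit. Unset Printing Implicit Defensive.
Import Order.TTheory GRing.Theory Num.Theory.
Local Open Scope ring_scope.

Definition dotp {R : realType} {d : nat} (u v : 'rV[R]_d) : R :=
  \sum_(j < d) u 0 j * v 0 j.

Definition norm2 {R : realType} {d : nat} (u : 'rV[R]_d) : R :=
  Num.sqrt (dotp u u).

(* P w = (I - v* v*^T) w *)
Definition projP {R : realType} {d : nat} (vs w : 'rV[R]_d) : 'rV[R]_d :=
  w - dotp vs w *: vs.

(* Oja-type iterates: v_0 = v0, v_i = v_{i-1} + eta <phi(x_i), v_{i-1}> phi(x_i).
   feature i = phi(x_i) for i = 1..n (index 0 unused). *)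
Fixpoint iterate {R : realType} {d : nat} (eta : R) (feature : nat -> 'rV[R]_d)
    (v0 : 'rV[R]_d) (i : nat) : 'rV[R]_d :=
  match i with
  | 0 => v0
  | k.+1 => let vk := iterate eta feature v0 k in
            vk + (eta * dotp (feature k.+1) vk) *: feature k.+1
  end.

Definition normalize {R : realType} {d : nat} (v : 'rV[R]_d) : 'rV[R]_d :=
  (norm2 v)^-1 *: v.

From HB Require Import structures.
From mathcomp Require Import all_boot all_order all_algebra.
From mathcomp Require Import all_classical all_reals all_analysis.
From mathcomp Require Import ring lra zify.
Import Order.TTheory GRing.Theory Num.Theory.
Local Open Scope ring_scope.

(* Write [v_i = v_(i-1) + s_i phi_i] with [s_i = eta <phi_i, v_(i-1)>], so that
   [P v_(i-1) = sum_(j < i) s_j P phi_j].  With [A = alpha / eta], the covariance bound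
   off [v*] gives, for a block [Z = sum_(a <= j < b) s_j P phi_j], both
   [|Z|^2 <= A sum_(a <= j < b) s_j^2] and [sum_i <phi_i, Z>^2 <= A |Z|^2].  Splitting
   [1, n] dyadically then yields
   [sum_i <phi_i, P v_(i-1)>^2 / |v_(i-1)|^2 <= A^2 (log2 n + 2)^2 sum_j (s_j / |v_j|)^2].
   Finally [|v_j|^2 >= |v_(j-1)|^2 + 2 s_j^2 / eta], so
   [(s_j / |v_j|)^2 <= eta (ln |v_j| - ln |v_(j-1)|)], which telescopes to [eta ln |v_n|]. *)

Section DotProduct.
Context {R : realType} {d : nat}.
Implicit Types (u v w : 'rV[R]_d).

Lemma dotpC u v : dotp u v = dotp v u.
Proof. by rewrite /dotp; apply: eq_bigr => j _; rewrite mulrC. Qed.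

Lemma dotpDr u v w : dotp u (v + w) = dotp u v + dotp u w.
Proof. by rewrite /dotp -big_split; apply: eq_bigr => j _; rewrite !mxE mulrDr. Qed.

Lemma dotpBr u v w : dotp u (v - w) = dotp u v - dotp u w.
Proof. by rewrite /dotp -sumrB; apply: eq_bigr => j _; rewrite !mxE mulrBr. Qed.

Lemma dotpZr u v (c : R) : dotp u (c *: v) = c * dotp u v.
Proof. by rewrite /dotp mulr_sumr; apply: eq_bigr => j _; rewrite !mxE mulrCA. Qed.

Lemma dotp0r u : dotp u 0 = 0.
Proof. by rewrite /dotp big1 // => j _; rewrite mxE mulr0. Qed.

Lemma dotpDl u v w : dotp (v + w) u = dotp v u + dotp w u.
Proof. by rewrite dotpC dotpDr !(dotpC u). Qed.

Lemma dotpZl u v (c : R) : dotp (c *: v) u = c * dotp v u.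
Proof. by rewrite dotpC dotpZr dotpC. Qed.

Lemma dotp_sumr u (r : seq nat) (P : pred nat) (F : nat -> 'rV[R]_d) :
  dotp u (\sum_(j <- r | P j) F j) = \sum_(j <- r | P j) dotp u (F j).
Proof. by apply: (big_morph (dotp u)); [exact: dotpDr | exact: dotp0r]. Qed.

Lemma dotpp_ge0 u : 0 <= dotp u u.
Proof. by apply: sumr_ge0 => j _; rewrite -expr2 sqr_ge0. Qed.

Lemma dotpp_eq0 u : dotp u u = 0 -> u = 0.
Proof.
move=> /eqP; rewrite /dotp psumr_eq0 => [/allP u0|j _]; last by rewrite -expr2 sqr_ge0.
apply/matrixP => i j; rewrite (ord1 i) mxE.
by have := u0 j (mem_index_enum j); rewrite -expr2 sqrf_eq0 => /eqP.
Qed.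

Lemma sqr_norm2 u : norm2 u ^+ 2 = dotp u u.
Proof. by rewrite /norm2 sqr_sqrtr // dotpp_ge0. Qed.

End DotProduct.

Section Projection.
Context {R : realType} {d : nat} (vs : 'rV[R]_d).

Lemma projPD x y : projP vs (x + y) = projP vs x + projP vs y.
Proof. by rewrite /projP dotpDr scalerDl opprD addrACA. Qed.

Lemma projPZ (c : R) x : projP vs (c *: x) = c *: projP vs x.
Proof. by rewrite /projP dotpZr scalerBr scalerA. Qed.

Lemma dotp_projP_orth Z x : dotp Z vs = 0 -> dotp Z (projP vs x) = dotp Z x.
Proof. by move=> Zvs; rewrite /projP dotpBr dotpZr Zvs mulr0 subr0. Qed.

Hypothesis vs_unit : dotp vs vs = 1.

Lemma projP_orth x : dotp (projP vs x) vs = 0.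
Proof. by rewrite dotpC /projP dotpBr dotpZr vs_unit mulr1 dotpC subrr. Qed.

Lemma projP_self : projP vs vs = 0.
Proof. by rewrite /projP vs_unit scale1r subrr. Qed.

End Projection.

Lemma sum_sqr_dotp_le_dotpp {R : realType} {d : nat} (vs : 'rV[R]_d)
    (F : nat -> 'rV[R]_d) (r : seq nat) (c : R) :
  (forall w, norm2 w <= 1 -> dotp w vs = 0 -> \sum_(i <- r) dotp w (F i) ^+ 2 <= c) ->
  forall Z, dotp Z vs = 0 -> \sum_(i <- r) dotp Z (F i) ^+ 2 <= c * dotp Z Z.
Proof.
move=> unit_bound Z Zvs.
have [/dotpp_eq0 ->|Z_neq0] := eqVneq (dotp Z Z) 0.
  by rewrite dotp0r mulr0 big1 // => i _; rewrite dotpC dotp0r expr0n.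
have ZZ_gt0 : 0 < dotp Z Z by rewrite lt_def Z_neq0 dotpp_ge0.
set k := (Num.sqrt (dotp Z Z))^-1.
have k2 : k ^+ 2 = (dotp Z Z)^-1 by rewrite exprVn sqr_sqrtr // ltW.
have kZ_le1 : norm2 (k *: Z) <= 1.
  by rewrite /norm2 dotpZl dotpZr mulrA -expr2 k2 mulVf ?gt_eqF // sqrtr1.
have kZ_orth : dotp (k *: Z) vs = 0 by rewrite dotpZl Zvs mulr0.
have := unit_bound _ kZ_le1 kZ_orth.
under eq_bigr => i _ do rewrite dotpZl exprMn.
by rewrite -mulr_sumr k2 ler_pdivrMl // mulrC.
Qed.

Lemma sumr_subrange_le {R : numDomainType} (F : nat -> R) m a b n :
  (forall i, 0 <= F i) -> (m <= a)%N -> (a <= b)%N -> (b <= n)%N ->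
  \sum_(a <= i < b) F i <= \sum_(m <= i < n) F i.
Proof.
move=> F_ge0 ma ab bn.
rewrite (big_cat_nat ma (leq_trans ab bn)) (big_cat_nat ab bn) /= addrCA lerDl.
by rewrite addr_ge0 // sumr_ge0.
Qed.

Lemma sum_sqr_addr_le {R : realFieldType} (r : seq nat) (x y : nat -> R) (K : R) :
  0 <= K ->
  K * \sum_(i <- r) (x i + y i) ^+ 2
    <= (K + 1) * \sum_(i <- r) x i ^+ 2 + K * (K + 1) * \sum_(i <- r) y i ^+ 2.
Proof.
move=> K_ge0; rewrite !mulr_sumr -big_split; apply: ler_sum => i _ /=.
by have := sqr_ge0 (x i - K * y i); lra.
Qed.

Lemma one_sub_div_le_ln {R : realType} (x y : R) : 0 < x -> 0 < y ->
  1 - x / y <= ln y - ln x.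
Proof.
move=> x_gt0 y_gt0; have xy_gt0 : 0 < x / y by rewrite divr_gt0.
have := @le_ln1Dx R (x / y - 1) ltac:(lra).
by rewrite addrCA subrr addr0 ln_div ?posrE //; lra.
Qed.

Lemma sqr_div_le_subr_ln {R : realType} (e c x y : R) : 0 < e -> 0 < x -> 0 < y ->
  c ^+ 2 <= e / 2 * (y ^+ 2 - x ^+ 2) -> (c / y) ^+ 2 <= e * (ln y - ln x).
Proof.
move=> e_gt0 x_gt0 y_gt0 c_le.
have := @one_sub_div_le_ln R _ _ (exprn_gt0 2 x_gt0) (exprn_gt0 2 y_gt0).
rewrite !lnXn // -mulrnBl -mulr_natl => ln_le.
rewrite exprMn; apply: le_trans (ler_wpM2r (sqr_ge0 _) c_le) _.
rewrite [X in X <= _](_ : _ = e / 2 * (1 - x ^+ 2 / y ^+ 2)); last by field; rewrite gt_eqF.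
rewrite [X in _ <= X](_ : _ = e / 2 * (2 * (ln y - ln x))); last by field.
by apply: ler_wpM2l; first by rewrite divr_ge0 // ltW.
Qed.

Lemma trunc_log2_le_ln {R : realType} n : (2 <= n)%N ->
  (trunc_log 2 n).+2%:R <= 10 * ln (n%:R : R).
Proof.
move=> n_ge2; set t := trunc_log 2 n.
have ln2 : 1 / 2 <= ln (2 : R).
  by have := @one_sub_div_le_ln R 1 2 ltr01 (ltr0Sn R 1); rewrite ln1; lra.
have ln2n : ln (2 : R) <= ln (n%:R : R) by rewrite ler_ln ?posrE ?ltr0n ?(ler_nat R 2 n) //; lia.
have tln2 : t%:R * ln (2 : R) <= ln (n%:R : R).
  have pow_le : (2 ^ t <= n)%N by apply: trunc_logP; lia.
  rewrite mulr_natl -lnXn // -natrX ler_ln ?posrE ?ltr0n ?expn_gt0 ?ler_nat //; lia.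
have t_ge0 : 0 <= (t%:R : R) by [].
rewrite -addn2 natrD; nra.
Qed.

Section OjaIterates.
Variables (R : realType) (d : nat) (phi : nat -> 'rV[R]_d) (eta : R) (vs : 'rV[R]_d).
Hypothesis eta_gt0 : 0 < eta.
Hypothesis vs_unit : dotp vs vs = 1.

(* [v j = v j.-1 + s j *: phi j], hence [projP vs (v b.-1) = incr 1 b] and
   [corr 1 i = dotp (phi i) (projP vs (normalize (v i.-1)))]. *)
Let v := iterate eta phi vs.
Let rho j := norm2 (v j).
Let s j := eta * dotp (phi j) (v j.-1).
Let incr a b := \sum_(a <= j < b) s j *: projP vs (phi j).
Let corr a i := dotp (phi i) (incr a i) / rho i.-1.

Lemma iterateS j : v j.+1 = v j + s j.+1 *: phi j.+1.
Proof. by []. Qed.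

Lemma dotpp_iterateS j : dotp (v j.+1) (v j.+1) = dotp (v j) (v j)
  + 2 * eta * dotp (phi j.+1) (v j) ^+ 2 + s j.+1 ^+ 2 * dotp (phi j.+1) (phi j.+1).
Proof.
rewrite iterateS dotpDl !dotpDr !dotpZr !dotpZl /s /= (dotpC (v j)).
by rewrite !expr2; lra.
Qed.

Lemma le_rho : {homo rho : p q / (p <= q)%N >-> p <= q}.
Proof.
apply: homo_leq => [x|y x z|j]; [exact: lexx | exact: le_trans |].
rewrite /rho /norm2 ler_sqrt ?dotpp_ge0 // dotpp_iterateS.
have := mulr_ge0 (sqr_ge0 (s j.+1)) (dotpp_ge0 (phi j.+1)).
have := mulr_ge0 (mulr_ge0 (ler0n R 2) (ltW eta_gt0)) (sqr_ge0 (dotp (phi j.+1) (v j))).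
lra.
Qed.

Lemma rho0 : rho 0 = 1.
Proof. by rewrite /rho /norm2 /= vs_unit sqrtr1. Qed.

Lemma rho_ge1 j : 1 <= rho j.
Proof. by rewrite -rho0; apply: le_rho. Qed.

Lemma rho_gt0 j : 0 < rho j.
Proof. exact: lt_le_trans ltr01 (rho_ge1 j). Qed.

Lemma sqr_div_rho_le (x : R) p q : (p <= q)%N -> (x / rho q) ^+ 2 <= (x / rho p) ^+ 2.
Proof.
move=> pq; rewrite !exprMn; apply: ler_wpM2l; first exact: sqr_ge0.
rewrite lerXn2r ?nnegrE ?invr_ge0 ?(ltW (rho_gt0 _)) //.
by rewrite lef_pV2 ?posrE ?rho_gt0 // le_rho.
Qed.

Lemma sqr_s_le j : s j.+1 ^+ 2 <= eta / 2 * (rho j.+1 ^+ 2 - rho j ^+ 2).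
Proof.
rewrite !sqr_norm2 dotpp_iterateS.
have rest_ge0 := mulr_ge0 (sqr_ge0 (s j.+1)) (dotpp_ge0 (phi j.+1)).
rewrite [X in X <= _](_ : _ = eta / 2 * (2 * eta * dotp (phi j.+1) (v j) ^+ 2)); last first.
  by rewrite /s; field.
by apply: ler_wpM2l; [rewrite divr_ge0 // ltW | lra].
Qed.

Lemma sqr_s_div_rho_le j : (s j.+1 / rho j.+1) ^+ 2 <= eta * (ln (rho j.+1) - ln (rho j)).
Proof. exact: sqr_div_le_subr_ln eta_gt0 (rho_gt0 j) (rho_gt0 j.+1) (sqr_s_le j). Qed.

Lemma sum_sqr_s_div_rho_le n : \sum_(1 <= j < n.+1) (s j / rho j) ^+ 2 <= eta * ln (rho n).
Proof.
have -> : ln (rho n) = \sum_(0 <= j < n) (ln (rho j.+1) - ln (rho j)).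
  by rewrite telescope_sumr // rho0 ln1 subr0.
rewrite big_add1 /= mulr_sumr; apply: ler_sum => j _; exact: sqr_s_div_rho_le.
Qed.

Lemma incr_orth a b : dotp (incr a b) vs = 0.
Proof.
rewrite dotpC dotp_sumr big1 // => j _.
by rewrite dotpZr dotpC projP_orth ?mulr0.
Qed.

Lemma projP_iterate m : projP vs (v m) = incr 1 m.+1.
Proof.
elim: m => [|m IH]; first by rewrite /incr big_geq //= projP_self.
by rewrite iterateS projPD projPZ IH /incr [in RHS]big_nat_recr.
Qed.

Lemma dotp_projP_normalize i : (0 < i)%N ->
  dotp (phi i) (projP vs (normalize (v i.-1))) = corr 1 i.
Proof. by move=> i_gt0; rewrite /normalize projPZ dotpZr projP_iterate prednK // mulrC. Qed.

Lemma corr_diag a : corr a a = 0.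
Proof. by rewrite /corr /incr big_geq // dotp0r mul0r. Qed.

Lemma sum_sqr_corr_short a b : (b <= a.+1)%N -> \sum_(a <= i < b) corr a i ^+ 2 = 0.
Proof.
move=> ba; rewrite big_nat_cond big1 // => i /andP[/andP[ai ib] _].
by rewrite (_ : i = a) ?corr_diag ?expr0n //; lia.
Qed.

Lemma corr_split {a m i} : (a <= m)%N -> (m <= i)%N ->
  corr a i = corr m i + dotp (phi i) (incr a m) / rho i.-1.
Proof. by move=> am mi; rewrite /corr /incr (big_cat_nat am mi) dotpDr mulrDl addrC. Qed.

Section CovarianceBound.
Variables (n : nat) (A : R).
Hypothesis A_gt0 : 0 < A.
Hypothesis cov_bound : forall Z, dotp Z vs = 0 ->
  \sum_(1 <= i < n.+1) dotp Z (phi i) ^+ 2 <= A * dotp Z Z.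

Lemma cov_bound_sub {Z a b} : dotp Z vs = 0 -> (0 < a)%N -> (a <= b)%N -> (b <= n.+1)%N ->
  \sum_(a <= i < b) dotp Z (phi i) ^+ 2 <= A * dotp Z Z.
Proof.
move=> Zvs a_gt0 ab bn; apply: le_trans (cov_bound _ Zvs).
by apply: sumr_subrange_le => // i; exact: sqr_ge0.
Qed.

Lemma dotpp_incr_le a b : (0 < a)%N -> (a <= b)%N -> (b <= n.+1)%N ->
  dotp (incr a b) (incr a b) <= A * \sum_(a <= j < b) s j ^+ 2.
Proof.
move=> a_gt0 ab bn; set Z := incr a b.
have ZZ : dotp Z Z = \sum_(a <= j < b) s j * dotp Z (phi j).
  rewrite {2}/Z /incr dotp_sumr; apply: eq_bigr => j _.
  by rewrite dotpZr dotp_projP_orth // incr_orth.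
have am_gm : 2 * A * dotp Z Z
    <= A ^+ 2 * \sum_(a <= j < b) s j ^+ 2 + \sum_(a <= j < b) dotp Z (phi j) ^+ 2.
  rewrite ZZ !mulr_sumr -big_split /=; apply: ler_sum => j _.
  by have := sqr_ge0 (A * s j - dotp Z (phi j)); lra.
have cov_le := cov_bound_sub (incr_orth a b) a_gt0 ab bn.
by rewrite -(ler_pM2l A_gt0) mulrA -expr2; lra.
Qed.

Lemma cross_block_le {a m b} : (0 < a)%N -> (a <= m)%N -> (m <= b)%N -> (b <= n.+1)%N ->
  \sum_(m <= i < b) (dotp (phi i) (incr a m) / rho i.-1) ^+ 2
    <= A ^+ 2 * \sum_(a <= j < m) (s j / rho j) ^+ 2.
Proof.
move=> a_gt0 am mb bn; set Z := incr a m.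
have rho_i_le : \sum_(m <= i < b) (dotp (phi i) Z / rho i.-1) ^+ 2
    <= \sum_(m <= i < b) (dotp Z (phi i) / rho m.-1) ^+ 2.
  by apply: ler_sum_nat => i /andP[mi _]; rewrite dotpC sqr_div_rho_le // -!subn1 leq_sub2r.
have rho_j_le : A ^+ 2 * \sum_(a <= j < m) (s j / rho m.-1) ^+ 2
    <= A ^+ 2 * \sum_(a <= j < m) (s j / rho j) ^+ 2.
  apply: ler_wpM2l; first exact: sqr_ge0.
  by apply: ler_sum_nat => j /andP[_ jm]; apply: sqr_div_rho_le; lia.
apply: le_trans rho_i_le (le_trans _ rho_j_le).
under eq_bigr do rewrite exprMn.
under [in X in _ <= _ * X]eq_bigr do rewrite exprMn.
rewrite -!mulr_suml [in X in _ <= X]mulrA; apply: ler_wpM2r; first exact: sqr_ge0.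
apply: le_trans (cov_bound_sub (incr_orth a m) (leq_trans a_gt0 am) mb bn) _.
by rewrite expr2 -mulrA ler_pM2l // dotpp_incr_le // (leq_trans mb).
Qed.

Lemma sum_sqr_corr_dyadic k a b : (0 < a)%N -> (a <= b)%N -> (b <= n.+1)%N ->
  (b - a <= 2 ^ k)%N ->
  \sum_(a <= i < b) corr a i ^+ 2 <= A ^+ 2 * k.+1%:R ^+ 2 * \sum_(a <= j < b) (s j / rho j) ^+ 2.
Proof.
elim: k a b => [|k IH] a b a_gt0 ab bn.
  rewrite expn0 => ba; rewrite sum_sqr_corr_short; last by lia.
  apply: mulr_ge0; first by rewrite expr1n mulr1 sqr_ge0.
  by apply: sumr_ge0 => j _; exact: sqr_ge0.
rewrite expnS => ba; set m := minn b (a + 2 ^ k).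
have am : (a <= m)%N by lia.
have mb : (m <= b)%N by lia.
have m_gt0 : (0 < m)%N by lia.
have left_le := IH a m a_gt0 am (leq_trans mb bn) ltac:(lia).
have right_le := IH m b m_gt0 mb bn ltac:(lia).
have cross_le := cross_block_le a_gt0 am mb bn.
have K_gt0 : 0 < k.+1%:R :> R by rewrite ltr0Sn.
(* Weighing the split as [(x + y)^2 <= (1 + 1/K) x^2 + (1 + K) y^2] makes the
   constant grow only from [K^2] to [(K + 1)^2]. *)
have split_le : k.+1%:R * \sum_(m <= i < b) corr a i ^+ 2
    <= (k.+1%:R + 1) * \sum_(m <= i < b) corr m i ^+ 2
       + k.+1%:R * (k.+1%:R + 1) * \sum_(m <= i < b) (dotp (phi i) (incr a m) / rho i.-1) ^+ 2.
  under eq_big_nat => i /andP[mi _] do rewrite (corr_split am mi).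
  exact: sum_sqr_addr_le (ltW K_gt0).
rewrite !(big_cat_nat am mb) /= (_ : k.+2%:R = k.+1%:R + 1); last by rewrite -addn1 natrD.
set K := k.+1%:R in K_gt0 left_le right_le split_le *.
set B := A ^+ 2 in left_le right_le cross_le *.
set TL := \sum_(a <= j < m) (s j / rho j) ^+ 2 in left_le cross_le *.
set TR := \sum_(m <= j < b) (s j / rho j) ^+ 2 in right_le *.
have B_ge0 : 0 <= B by exact: sqr_ge0.
have TL_ge0 : 0 <= TL by apply: sumr_ge0 => j _; exact: sqr_ge0.
have TR_ge0 : 0 <= TR by apply: sumr_ge0 => j _; exact: sqr_ge0.
have right_total_le : \sum_(m <= i < b) corr a i ^+ 2 <= (K + 1) * (K * B * TR + B * TL).
  rewrite -(ler_pM2l K_gt0); apply: le_trans split_le _.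
  have K1_ge0 : 0 <= K + 1 by lra.
  have := ler_wpM2l K1_ge0 right_le.
  have := ler_wpM2l (mulr_ge0 (ltW K_gt0) K1_ge0) cross_le.
  lra.
have := mulr_ge0 (mulr_ge0 B_ge0 TL_ge0) (ltW K_gt0).
have := mulr_ge0 (mulr_ge0 B_ge0 TR_ge0) (ltW K_gt0).
have := mulr_ge0 B_ge0 TR_ge0.
lra.
Qed.

Lemma sum_sqr_corr_le k : (n <= 2 ^ k)%N ->
  \sum_(1 <= i < n.+1) corr 1 i ^+ 2 <= A ^+ 2 * k.+1%:R ^+ 2 * (eta * ln (rho n)).
Proof.
move=> nk; have nk' : (n.+1 - 1 <= 2 ^ k)%N by rewrite subn1.
apply: le_trans (sum_sqr_corr_dyadic k 1 n.+1 (ltnSn 0) (ltn0Sn n) (leqnn _) nk') _.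
by apply: ler_wpM2l; [rewrite mulr_ge0 ?sqr_ge0 | exact: sum_sqr_s_div_rho_le].
Qed.

Lemma sum_sqr_dotp_projP_normalize_le :
  eta * \sum_(1 <= i < n.+1) dotp (phi i) (projP vs (normalize (v i.-1))) ^+ 2
    <= 100 * (eta * A) ^+ 2 * ln (n%:R : R) ^+ 2 * ln (rho n).
Proof.
under eq_big_nat => i /andP[i_gt0 _] do rewrite dotp_projP_normalize //.
have ln_rho_ge0 : 0 <= ln (rho n) by rewrite ln_ge0 // rho_ge1.
have [n_le1|n_ge2] := leqP n 1.
  rewrite sum_sqr_corr_short // mulr0; apply: mulr_ge0 ln_rho_ge0.
  by apply: mulr_ge0 (sqr_ge0 _); exact: mulr_ge0 (ler0n _ 100) (sqr_ge0 _).
have n_le := ltnW (trunc_log_ltn n (ltnSn 1)).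
apply: le_trans (ler_wpM2l (ltW eta_gt0) (sum_sqr_corr_le _ n_le)) _.
have := @trunc_log2_le_ln R n n_ge2.
set K : R := (trunc_log 2 n).+2%:R; set l := ln (n%:R : R) => K_le.
have K2_le : K ^+ 2 <= 100 * l ^+ 2 by have : 0 <= K by []; nra.
rewrite (_ : eta * (A ^+ 2 * K ^+ 2 * (eta * ln (rho n)))
  = (eta * A) ^+ 2 * (K ^+ 2 * ln (rho n))); last by ring.
rewrite (_ : 100 * _ * _ * _ = (eta * A) ^+ 2 * (100 * l ^+ 2 * ln (rho n))); last by ring.
by apply: ler_wpM2l; [exact: sqr_ge0 | exact: ler_wpM2r].
Qed.

End CovarianceBound.
End OjaIterates.

Theorem lemmaC5 (R : realType) (d n : nat) (feature : nat -> 'rV[R]_d)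
    (eta alpha beta : R) (vstar : 'rV[R]_d) :
  0 < eta -> eta < 1 / 10 ->
  0 < alpha -> alpha <= beta ->
  norm2 vstar = 1 ->
  eta * (\sum_(1 <= i < n.+1) dotp vstar (feature i) ^+ 2) = beta ->
  (forall w : 'rV[R]_d, norm2 w <= 1 -> dotp w vstar = 0 ->
     eta * (\sum_(1 <= i < n.+1) dotp w (feature i) ^+ 2) <= alpha) ->
  let v := iterate eta feature vstar in
  eta * (\sum_(1 <= i < n.+1)
           dotp (feature i) (projP vstar (normalize (v i.-1))) ^+ 2)
  <= 100 * alpha ^+ 2 * (ln (n%:R : R)) ^+ 2 * ln (norm2 (v n)).
Proof.
move=> eta_gt0 _ alpha_gt0 _ vstar_norm _ unit_bound.
have vstar_unit : dotp vstar vstar = 1 by rewrite -sqr_norm2 vstar_norm expr1n.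
have cov_bound : forall Z, dotp Z vstar = 0 ->
    \sum_(1 <= i < n.+1) dotp Z (feature i) ^+ 2 <= alpha / eta * dotp Z Z.
  apply: sum_sqr_dotp_le_dotpp => w w_le1 w_orth.
  by rewrite mulrC ler_pdivlMl // unit_bound.
have eta_alpha : eta * (alpha / eta) = alpha by rewrite mulrC divfK ?gt_eqF.
have := @sum_sqr_dotp_projP_normalize_le R d feature eta vstar eta_gt0 vstar_unit
  n (alpha / eta) (divr_gt0 alpha_gt0 eta_gt0) cov_bound.
by rewrite eta_alpha.
Qed.
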